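(* Consider the equation $q_{1,1}+q_{0,1}q_{0,2}=0$ for $q=q(z_1,z_2)$, where $q_{k,l}:=\partial^{k+l}q/\partial z_1^k\partial z_2^l$. A differential function $\breve\alpha$ depending only on $z_1,z_2$ and the parametric derivatives $q_{k,l}$ ($k\in\mathbb N_0$, $l\in\{0,1\}$) satisfies $\hat{\mathrm D}_2\breve\alpha=0$ (i.e., is a $z_2$-integral of the equation) if and only if it is a sufficiently smooth function of $z_1$, $I^1:=q_{1,0}+\frac12(q_{0,1})^2$ and finitely many total derivatives of $I^1$ with respect to $z_1$: \[ \breve\alpha=\breve\alpha(z_1,I^1,\mathrm D_1I^1,\dots,\mathrm D_1^rI^1)\quad\text{for some } r\in\mathbb N. \]
   Context: $\mathrm D_1,\mathrm D_2$ are total derivatives with respect to $z_1,z_2$. The equation is solved for $q_{0,2}$; derivatives $q_{k,l}$ with $l\ge2$ are principal and those with $l\le1$ parametric. $\hat{\mathrm D}_2$ is the restriction of $\mathrm D_2$ to the solution manifold, acting on functions of $z_1,z_2$ and parametric derivatives with principal derivatives eliminated via the equation and its differential consequences. *)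

From Stdlib Require Import Reals.
From Coquelicot Require Import Coquelicot.
Open Scope R_scope.

Definition upd {T : Type} (eqd : forall a b : T, {a = b} + {a <> b})
  (x : T -> R) (c : T) (t : R) : T -> R :=
  fun d => if eqd d c then t else x d.

Definition pd {T : Type} (eqd : forall a b : T, {a = b} + {a <> b})
  (c : T) (f : (T -> R) -> R) : (T -> R) -> R :=
  fun x => Derive (fun t => f (upd eqd x c t)) (x c).

Definition order_le {T : Type} (ord : T -> nat) (N : nat) (f : (T -> R) -> R) : Prop :=
  forall x y, (forall c, (ord c <= N)%nat -> x c = y c) -> f x = f y.

Definition near_ord {T : Type} (ord : T -> nat) (M : nat) (d : R) (x y : T -> R) : Prop :=
  forall c, (ord c <= M)%nat -> Rabs (y c - x c) < d.

(* continuity on D (product topology) *)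
Definition cont_on {T : Type} (ord : T -> nat) (D : (T -> R) -> Prop) (f : (T -> R) -> R) : Prop :=
  forall x, D x -> forall eps, 0 < eps ->
    exists (M : nat) (d : R), 0 < d /\
      forall y, D y -> near_ord ord M d x y -> Rabs (f y - f x) < eps.

Fixpoint Ck_on {T : Type} (eqd : forall a b : T, {a = b} + {a <> b}) (ord : T -> nat)
  (D : (T -> R) -> Prop) (k : nat) (f : (T -> R) -> R) : Prop :=
  match k with
  | O => cont_on ord D f
  | S k' => cont_on ord D f /\
      forall c, (forall x, D x -> ex_derive (fun t => f (upd eqd x c t)) (x c)) /\
                Ck_on eqd ord D k' (pd eqd c f)
  end.

Definition smooth_on {T : Type} (eqd : forall a b : T, {a = b} + {a <> b}) (ord : T -> nat)
  (D : (T -> R) -> Prop) (f : (T -> R) -> R) : Prop :=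
  forall k, Ck_on eqd ord D k f.

(* ---------- Jet coordinates: z1, z2, q_{k,0}, q_{k,1} (parametric) ---------- *)

Inductive coord : Type := Z1 | Z2 | Q0 (k : nat) | Q1 (k : nat).

Definition coord_eq_dec : forall a b : coord, {a = b} + {a <> b}.
Proof. decide equality; apply PeanoNat.Nat.eq_dec. Defined.

Definition cord (c : coord) : nat :=
  match c with Z1 | Z2 => O | Q0 k => k | Q1 k => k end.

Definition jet := coord -> R.

Definition pdJ := pd coord_eq_dec.

(* domain where the equation can be solved for q_{0,2}: q_{0,1} <> 0 *)
Definition Jdom (p : jet) : Prop := p (Q1 0) <> 0.

(* total derivative D_1 on functions of order <= N of parametric coordinates *)
Definition Dh1 (N : nat) (a : jet -> R) : jet -> R :=
  fun p => pdJ Z1 a p +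
    sum_f_R0 (fun k => p (Q0 (S k)) * pdJ (Q0 k) a p + p (Q1 (S k)) * pdJ (Q1 k) a p) N.

(* q_{0,2} from the equation q_{1,1} + q_{0,1} q_{0,2} = 0 *)
Definition q02 (p : jet) : R := - p (Q1 1) / p (Q1 0).

(* q_{k,2} = D_1^k q_{0,2}, expressed in parametric derivatives (order k+1) *)
Fixpoint q2 (k : nat) : jet -> R :=
  match k with
  | O => q02
  | S j => Dh1 (S j) (q2 j)
  end.

(* restricted total derivative \hat D_2 on functions of order <= N *)
Definition Dh2 (N : nat) (a : jet -> R) : jet -> R :=
  fun p => pdJ Z2 a p +
    sum_f_R0 (fun k => p (Q1 k) * pdJ (Q0 k) a p + q2 k p * pdJ (Q1 k) a p) N.

Definition I1 (p : jet) : R := p (Q0 1) + (p (Q1 0)) ^ 2 / 2.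

Fixpoint DI (j : nat) : jet -> R :=
  match j with
  | O => I1
  | S j' => Dh1 (S j') (DI j')
  end.

Definition args (p : jet) : nat -> R :=
  fun i => match i with O => p Z1 | S j => DI j p end.

From Stdlib Require Import Reals Lra Lia List FunctionalExtensionality.
From Stdlib Require FinFun.
From Coquelicot Require Import Coquelicot.
Open Scope R_scope.

(* Write [D_1^j I^1 = q_{j+1,0} + H_j], with [H_j] a polynomial in the [q_{k,1}] and [1/q_{0,1}].

   Sufficiency: [\hat D_2 z_1 = 0], and [\hat D_2 H_j = - q_{j+1,1}] follows by induction on [j]
   from the commutation of [D_1] and [\hat D_2]; so [\hat D_2] kills every [D_1^j I^1], hence by the
   chain rule every smooth function of [z_1] and finitely many of them.

   Necessity: in the coordinates where [q_{j+1,0}] is replaced by [D_1^j I^1], [\hat D_2] becomes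
   [W = d/dz_2 + q_{0,1} d/dq_{0,0} + sum_k q_{k,2} d/dq_{k,1}]; let [beta] be [alpha] in these
   coordinates. As [q_{k,2}] is affine in [q_{k+1,1}] with slope [-1/q_{0,1}] and does not involve
   higher [q_{l,1}], comparing [W beta = 0] at two points that differ only in [q_{k+1,1}] kills the
   [q_{k,1}]-derivative of [beta], from the top order down. Rescaling [q_{0,1}] then separates the two
   remaining terms. So [beta] is constant along the other coordinates on segments where [q_{0,1}]
   keeps its sign, which gives the local representation. *)

(** * Real calculus and partial derivatives on [T -> R] *)

Lemma Rabs_between a b u z d :
  Rmin a b <= u <= Rmax a b -> Rabs (a - z) < d -> Rabs (b - z) < d -> Rabs (u - z) < d.
Proof. unfold Rmin, Rmax; destruct (Rle_dec a b); split_Rabs; lra. Qed.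

Lemma is_derive_continuity_pt f x l : is_derive f x l -> continuity_pt f x.
Proof. intros Hf. apply derivable_continuous_pt, ex_derive_Reals_0. now exists l. Qed.

Lemma is_derive_near f x l : is_derive f x l ->
  forall eps, 0 < eps -> exists d, 0 < d /\ forall y, Rabs (y - x) < d -> Rabs (f y - f x) < eps.
Proof.
  intros Hf eps Heps.
  destruct (proj1 (continuity_pt_locally f x) (is_derive_continuity_pt f x l Hf) (mkposreal eps Heps))
    as [d Hd].
  exists d; split; [apply cond_pos | exact Hd].
Qed.

Lemma is_derive_small_o r k t0 k' : r t0 = 0 -> is_derive k t0 k' ->
  (forall eps, 0 < eps -> exists d, 0 < d /\
     forall t, Rabs (t - t0) < d -> Rabs (r t) <= eps * Rabs (k t - k t0)) ->
  is_derive r t0 0.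
Proof.
  intros Hr0 Hk Hsmall. apply is_derive_Reals. intros eps Heps.
  apply is_derive_Reals in Hk. destruct (Hk 1 Rlt_0_1) as [d1 Hd1].
  assert (Hk1 : 0 < Rabs k' + 2) by (pose proof (Rabs_pos k'); lra).
  destruct (Hsmall (eps / (Rabs k' + 2))) as [d2 [Hd2 Hr]]; [apply Rdiv_lt_0_compat; lra|].
  assert (Hd : 0 < Rmin d1 d2) by (apply Rmin_pos; [apply cond_pos | exact Hd2]).
  exists (mkposreal _ Hd). intros h Hh0 Hh. simpl in Hh.
  pose proof (Rmin_l d1 d2). pose proof (Rmin_r d1 d2).
  specialize (Hd1 h Hh0 ltac:(lra)). specialize (Hr (t0 + h) ltac:(replace (t0 + h - t0) with h by ring; lra)).
  set (q := (k (t0 + h) - k t0) / h) in Hd1.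
  assert (Hq : Rabs q < Rabs k' + 1).
  { replace q with ((q - k') + k') by ring. pose proof (Rabs_triang (q - k') k'). lra. }
  replace (k (t0 + h) - k t0) with (q * h) in Hr by (unfold q; field; exact Hh0).
  rewrite Hr0, Rminus_0_r, Rminus_0_r, Rabs_mult in *. unfold Rdiv. rewrite Rabs_mult, Rabs_inv.
  assert (Hha : 0 < Rabs h) by (apply Rabs_pos_lt; exact Hh0).
  apply (Rmult_lt_reg_r (Rabs h)); [exact Hha|].
  rewrite Rmult_assoc, Rinv_l, Rmult_1_r by lra.
  apply Rle_lt_trans with (eps / (Rabs k' + 2) * (Rabs q * Rabs h)); [exact Hr|].
  assert (eps / (Rabs k' + 2) * Rabs q < eps).
  { apply Rlt_le_trans with (eps / (Rabs k' + 2) * (Rabs k' + 2)).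
    - apply Rmult_lt_compat_l; [apply Rdiv_lt_0_compat|]; lra.
    - right; field; lra. }
  nra.
Qed.

Section CoordinateCalculus.
Context {T : Type} (eqd : forall a b : T, {a = b} + {a <> b}) (ord : T -> nat).

Lemma upd_same x c t : upd eqd x c t c = t.
Proof. unfold upd. destruct (eqd c c); congruence. Qed.

Lemma upd_other x c d t : d <> c -> upd eqd x c t d = x d.
Proof. intros H. unfold upd. destruct (eqd d c); congruence. Qed.

Lemma upd_upd x c s t : upd eqd (upd eqd x c s) c t = upd eqd x c t.
Proof. apply functional_extensionality; intro d. unfold upd. destruct (eqd d c); auto. Qed.

Lemma upd_id x c : upd eqd x c (x c) = x.
Proof. apply functional_extensionality; intro d. unfold upd. destruct (eqd d c); subst; auto. Qed.

Lemma upd_comm x c d s t : c <> d -> upd eqd (upd eqd x c s) d t = upd eqd (upd eqd x d t) c s.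
Proof.
  intros H. apply functional_extensionality. intros e. unfold upd.
  destruct (eqd e d); destruct (eqd e c); subst; congruence.
Qed.

Lemma near_ord_refl M d x : 0 < d -> near_ord ord M d x x.
Proof. intros Hd c _. rewrite Rminus_diag, Rabs_R0. exact Hd. Qed.

Definition has_partials_on (D : (T -> R) -> Prop) (g : (T -> R) -> R) : Prop :=
  forall c y, D y -> ex_derive (fun t => g (upd eqd y c t)) (y c).

Lemma smooth_on_partials D g : smooth_on eqd ord D g ->
  has_partials_on D g /\ forall c, cont_on ord D (pd eqd c g).
Proof.
  intros Hg. destruct (Hg 1%nat) as [_ H1]. split.
  - intros c y Hy. now apply H1.
  - intros c. apply H1.
Qed.

Lemma is_derive_line D g y c s : has_partials_on D g -> D (upd eqd y c s) ->
  is_derive (fun t => g (upd eqd y c t)) s (pd eqd c g (upd eqd y c s)).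
Proof.
  intros Hg Hy. specialize (Hg c _ Hy). unfold pd in *. rewrite upd_same in *.
  apply (ex_derive_ext _ (fun t => g (upd eqd y c t))) in Hg; [|intros t; now rewrite upd_upd].
  rewrite (Derive_ext _ (fun t => g (upd eqd y c t))) by (intros t; now rewrite upd_upd).
  now apply Derive_correct.
Qed.

Lemma line_const D g y c a b : has_partials_on D g ->
  (forall u, Rmin a b <= u <= Rmax a b -> D (upd eqd y c u) /\ pd eqd c g (upd eqd y c u) = 0) ->
  g (upd eqd y c a) = g (upd eqd y c b).
Proof.
  intros Hg H.
  destruct (MVT_gen (fun t => g (upd eqd y c t)) a b (fun _ => 0)) as [z [_ Hz]].
  - intros u Hu. destruct (H u ltac:(lra)) as [Hu1 Hu2]. rewrite <- Hu2. now apply (is_derive_line D).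
  - intros u Hu. eapply is_derive_continuity_pt. apply (is_derive_line D); auto. now apply H.
  - simpl in Hz. lra.
Qed.

(* Mean value theorem on the segment, then continuity of [pd eqd c g] at [y0]. *)
Lemma partial_increment D g y0 c M0 d0 : 0 < d0 ->
  (forall y, near_ord ord M0 d0 y0 y -> D y) -> has_partials_on D g -> cont_on ord D (pd eqd c g) ->
  forall eps, 0 < eps -> exists d, 0 < d /\
    forall y s, (forall c', Rabs (y c' - y0 c') < d) -> Rabs (s - y0 c) < d ->
    Rabs (g (upd eqd y c s) - g y - pd eqd c g y0 * (s - y c)) <= eps * Rabs (s - y c).
Proof.
  intros Hd0 HD Hg Hcont eps Heps.
  destruct (Hcont y0 (HD y0 (near_ord_refl _ _ _ Hd0)) eps Heps) as [M [d1 [Hd1 Hc]]].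
  exists (Rmin d0 d1). split; [now apply Rmin_pos|]. intros y s Hy Hs.
  pose proof (Rmin_l d0 d1). pose proof (Rmin_r d0 d1).
  assert (Hseg : forall u, Rmin (y c) s <= u <= Rmax (y c) s ->
            forall c', Rabs (upd eqd y c u c' - y0 c') < Rmin d0 d1).
  { intros u Hu c'. unfold upd. destruct (eqd c' c) as [->|]; [|apply Hy].
    exact (Rabs_between _ _ _ _ _ Hu (Hy c) Hs). }
  assert (HsegD : forall u, Rmin (y c) s <= u <= Rmax (y c) s -> D (upd eqd y c u)).
  { intros u Hu. apply HD. intros c' _. specialize (Hseg u Hu c'). lra. }
  destruct (MVT_gen (fun u => g (upd eqd y c u)) (y c) s (fun u => pd eqd c g (upd eqd y c u)))
    as [xi [Hxi Hmvt]].
  - intros u Hu. apply (is_derive_line D); auto. apply HsegD. lra.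
  - intros u Hu. eapply is_derive_continuity_pt. apply (is_derive_line D); auto.
  - simpl in Hmvt. rewrite upd_id in Hmvt. rewrite Hmvt, <- Rmult_minus_distr_r, Rabs_mult.
    apply Rmult_le_compat_r; [apply Rabs_pos|]. left. apply Hc; [now apply HsegD|].
    intros c' _. specialize (Hseg xi Hxi c'). lra.
Qed.

Fixpoint sum_list (l : list T) (g : T -> R) : R :=
  match l with nil => 0 | c :: l' => g c + sum_list l' g end.

Fixpoint upd_list (y0 : T -> R) (f : T -> R -> R) (cs : list T) (t : R) : T -> R :=
  match cs with
  | nil => y0
  | c :: cs' => upd eqd (upd_list y0 f cs' t) c (f c t)
  end.

Lemma upd_list_notin y0 f cs t c : ~ In c cs -> upd_list y0 f cs t c = y0 c.
Proof. induction cs; simpl; auto. intros H. rewrite upd_other; auto. Qed.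

Lemma upd_list_in y0 f cs t c : In c cs -> upd_list y0 f cs t c = f c t.
Proof.
  induction cs as [|a cs IH]; simpl; [tauto|]. intros Hc.
  destruct (eqd c a) as [->|Hne]; [apply upd_same|].
  rewrite upd_other by exact Hne. apply IH. destruct Hc; congruence.
Qed.

Lemma upd_list_near y0 f f' cs t0 :
  (forall c, In c cs -> f c t0 = y0 c) -> (forall c, In c cs -> is_derive (f c) t0 (f' c)) ->
  forall d, 0 < d -> exists eta, 0 < eta /\
    forall t, Rabs (t - t0) < eta -> forall c, Rabs (upd_list y0 f cs t c - y0 c) < d.
Proof.
  intros H0 Hd d Hdpos. induction cs as [|a cs IH].
  - exists 1. split; [lra|]. intros t _ c. simpl. now rewrite Rminus_diag, Rabs_R0.
  - destruct IH as [e1 [He1 IH]]; [intros; apply H0; simpl; auto | intros; apply Hd; simpl; auto|].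
    destruct (is_derive_near _ _ _ (Hd a (or_introl eq_refl)) d Hdpos) as [e2 [He2 Hc]].
    exists (Rmin e1 e2). split; [now apply Rmin_pos|].
    intros t Ht c. pose proof (Rmin_l e1 e2). pose proof (Rmin_r e1 e2). simpl.
    destruct (eqd c a) as [->|Hne].
    + rewrite upd_same, <- (H0 a (or_introl eq_refl)). apply Hc. lra.
    + rewrite upd_other by exact Hne. apply IH. lra.
Qed.

Section ChainRule.
Variables (g : (T -> R) -> R) (D : (T -> R) -> Prop) (M0 : nat) (d0 : R).
Variables (y0 : T -> R) (f : T -> R -> R) (f' : T -> R) (t0 : R).
Hypotheses (Hd0 : 0 < d0) (HD : forall y, near_ord ord M0 d0 y0 y -> D y).
Hypothesis Hg : has_partials_on D g.
Hypotheses (Hf0 : forall c, f c t0 = y0 c) (Hf' : forall c, is_derive (f c) t0 (f' c)).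

Lemma is_derive_upd_list_step cs c : ~ In c cs -> cont_on ord D (pd eqd c g) ->
  is_derive (fun t => g (upd eqd (upd_list y0 f cs t) c (f c t)) - g (upd_list y0 f cs t)) t0
    (pd eqd c g y0 * f' c).
Proof.
  intros Hc Hcont. set (A := pd eqd c g y0).
  set (r := fun t => g (upd eqd (upd_list y0 f cs t) c (f c t)) - g (upd_list y0 f cs t)
                     - A * (f c t - f c t0)).
  assert (Hr : is_derive r t0 0).
  { apply (is_derive_small_o r (f c) t0 (f' c)); [|apply Hf'|].
    - unfold r. rewrite (Hf0 c), <- (upd_list_notin y0 f cs t0 c Hc), upd_id. ring.
    - intros eps Heps.
      destruct (partial_increment D g y0 c M0 d0 Hd0 HD Hg Hcont eps Heps) as [d [Hd Hinc]].
      destruct (upd_list_near y0 f f' cs t0 (fun c _ => Hf0 c) (fun c _ => Hf' c) d Hd)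
        as [e1 [He1 Hnear]].
      destruct (is_derive_near _ _ _ (Hf' c) d Hd) as [e2 [He2 Hfc]].
      exists (Rmin e1 e2). split; [now apply Rmin_pos|]. intros t Ht.
      pose proof (Rmin_l e1 e2). pose proof (Rmin_r e1 e2).
      assert (Hyc : upd_list y0 f cs t c = f c t0) by (rewrite (Hf0 c); now apply upd_list_notin).
      unfold r. rewrite <- Hyc. apply Hinc.
      + apply Hnear. lra.
      + rewrite <- (Hf0 c). apply Hfc. lra. }
  apply (is_derive_ext (fun t : R => r t + A * (f c t - f c t0))); [intros t; unfold r; simpl; ring|].
  replace (A * f' c) with (0 + A * (f' c - 0)) by ring.
  apply (is_derive_plus _ _ _ _ _ Hr).
  apply (is_derive_scal (fun t => f c t - f c t0)).
  apply (is_derive_minus _ _ _ _ _ (Hf' c) (is_derive_const _ _)).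
Qed.

Lemma is_derive_upd_list cs : NoDup cs -> (forall c, In c cs -> cont_on ord D (pd eqd c g)) ->
  is_derive (fun t => g (upd_list y0 f cs t)) t0 (sum_list cs (fun c => pd eqd c g y0 * f' c)).
Proof.
  induction cs as [|c cs IH]; intros Hnd Hcont.
  - apply (is_derive_const (g y0) t0).
  - inversion Hnd as [|? ? Hnin Hnd']; subst.
    eapply is_derive_ext.
    2:{ apply (is_derive_plus _ _ _ _ _ (is_derive_upd_list_step cs c Hnin (Hcont c (or_introl eq_refl)))
                 (IH Hnd' (fun c' H => Hcont c' (or_intror H)))). }
    intros t. simpl. unfold plus; simpl. ring.
Qed.

End ChainRule.

Lemma is_derive_comp_order g K M0 d0 D (gam : R -> T -> R) (gam' : T -> R) cs t0 :
  order_le ord K g -> 0 < d0 -> (forall y, near_ord ord M0 d0 (gam t0) y -> D y) ->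
  has_partials_on D g -> (forall c, In c cs -> cont_on ord D (pd eqd c g)) ->
  NoDup cs -> (forall c, (ord c <= K)%nat -> In c cs) ->
  (forall c, is_derive (fun t => gam t c) t0 (gam' c)) ->
  is_derive (fun t => g (gam t)) t0 (sum_list cs (fun c => pd eqd c g (gam t0) * gam' c)).
Proof.
  intros Hord Hd0 HD Hg Hcont Hnd Hcov Hgam.
  apply (is_derive_ext (fun t => g (upd_list (gam t0) (fun c t => gam t c) cs t))).
  - intros t. apply Hord. intros c Hc. rewrite upd_list_in; auto.
  - apply (is_derive_upd_list g D M0 d0); auto.
Qed.

End CoordinateCalculus.

Lemma sum_f_R0_tail0 (f : nat -> R) a m :
  (forall k, (a < k <= m)%nat -> f k = 0) -> (a <= m)%nat -> sum_f_R0 f m = sum_f_R0 f a.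
Proof.
  intros H Ham. induction m.
  - now replace a with 0%nat by lia.
  - destruct (Nat.eq_dec a (S m)) as [->|Hne]; [reflexivity|].
    rewrite tech5, IHm, H by (try lia; intros; apply H; lia). ring.
Qed.

Lemma sum_f_R0_delta (g : nat -> R) j n : (j <= n)%nat ->
  sum_f_R0 (fun k => (if Nat.eq_dec k j then 1 else 0) * g k) n = g j.
Proof.
  intros Hj. rewrite (sum_f_R0_tail0 _ j) by (auto; intros k Hk; destruct (Nat.eq_dec k j); lia || ring).
  destruct j as [|j]; [simpl; ring|].
  rewrite tech5, sum_eq_R0; [destruct (Nat.eq_dec (S j) (S j)); [ring|congruence]|].
  intros k Hk. destruct (Nat.eq_dec k (S j)); [lia|ring].
Qed.

Lemma sum_f_R0_swap (a : nat -> nat -> R) n m :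
  sum_f_R0 (fun i => sum_f_R0 (fun k => a i k) m) n = sum_f_R0 (fun k => sum_f_R0 (fun i => a i k) n) m.
Proof. induction n; simpl; [reflexivity|]. now rewrite IHn, <- sum_plus. Qed.

Lemma sum_f_R0_scal_l (f : nat -> R) x n : x * sum_f_R0 f n = sum_f_R0 (fun i => x * f i) n.
Proof. rewrite scal_sum. apply sum_eq. intros; ring. Qed.

Lemma sum_f_R0_opp (f : nat -> R) n : sum_f_R0 (fun k => - f k) n = - sum_f_R0 f n.
Proof. induction n; simpl; [reflexivity|]. rewrite IHn. ring. Qed.

Section SumList.
Context {T : Type}.

Lemma sum_list_app (l1 l2 : list T) g : sum_list (l1 ++ l2) g = sum_list l1 g + sum_list l2 g.
Proof. induction l1; simpl; [ring|]. rewrite IHl1. ring. Qed.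

Lemma sum_list_map_seq (h : nat -> T) g n :
  sum_list (map h (seq 0 (S n))) g = sum_f_R0 (fun k => g (h k)) n.
Proof.
  induction n; [simpl; ring|]. rewrite seq_S, map_app, sum_list_app, IHn. simpl. ring.
Qed.

Lemma sum_list_ext (l : list T) g h : (forall c, In c l -> g c = h c) -> sum_list l g = sum_list l h.
Proof. induction l; simpl; auto. intros H. rewrite H, IHl; auto. Qed.

Lemma sum_list_scal (l : list T) g x : x * sum_list l g = sum_list l (fun c => x * g c).
Proof. induction l; simpl; [ring|]. rewrite <- IHl. ring. Qed.

Lemma sum_list_zero (l : list T) g : (forall c, In c l -> g c = 0) -> sum_list l g = 0.
Proof. induction l; simpl; auto. intros H. rewrite H, IHl; auto. ring. Qed.

Lemma sum_list_swap {U : Type} (l : list T) (m : list U) (a : T -> U -> R) :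
  sum_list l (fun c => sum_list m (fun i => a c i)) = sum_list m (fun i => sum_list l (fun c => a c i)).
Proof.
  induction l as [|c l IH]; simpl.
  - induction m as [|i m IHm]; simpl; [reflexivity|]. rewrite <- IHm. ring.
  - rewrite IH. clear IH. induction m as [|i m IHm]; simpl; [ring|]. rewrite <- IHm. ring.
Qed.

End SumList.

Lemma sum_f_R0_shift_delta (g : nat -> R) k m : (k <= S m)%nat ->
  sum_f_R0 (fun i => (if Nat.eq_dec (S i) k then 1 else 0) * g i) m =
  match k with O => 0 | S k' => g k' end.
Proof.
  intros Hk. destruct k as [|k'].
  - apply sum_eq_R0. intros i _. destruct (Nat.eq_dec (S i) 0); [lia|ring].
  - rewrite <- (sum_f_R0_delta g k' m) by lia. apply sum_eq. intros i _.
    destruct (Nat.eq_dec (S i) (S k')), (Nat.eq_dec i k'); lia || ring.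
Qed.

Lemma sum_f_R0_shift (g : nat -> R) n :
  sum_f_R0 (fun k => match k with O => 0 | S k' => g k' end) n + g n = sum_f_R0 g n.
Proof. induction n; simpl; [ring|]. rewrite <- IHn. ring. Qed.

(** * Jet coordinates *)

Notation updJ := (upd coord_eq_dec).

Lemma Jdom_abs_pos p : Jdom p -> 0 < Rabs (p (Q1 0)).
Proof. intros H. now apply Rabs_pos_lt. Qed.

Lemma Jdom_near p y : Jdom p -> near_ord cord 0 (Rabs (p (Q1 0))) p y -> Jdom y.
Proof.
  unfold Jdom. intros Hp Hn E. specialize (Hn (Q1 0) (le_n 0)).
  rewrite E, Rminus_0_l, Rabs_Ropp in Hn. lra.
Qed.

Lemma Jdom_upd_near p c t : Jdom p -> Rabs (t - p c) < Rabs (p (Q1 0)) -> Jdom (updJ p c t).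
Proof.
  intros Hp Ht. apply (Jdom_near p); auto. intros d _. unfold upd.
  destruct (coord_eq_dec d c) as [->|]; [exact Ht|].
  rewrite Rminus_diag, Rabs_R0. now apply Jdom_abs_pos.
Qed.

Lemma Jdom_upd_other p c t : c <> Q1 0 -> Jdom p -> Jdom (updJ p c t).
Proof. intros Hc Hp. unfold Jdom. now rewrite upd_other. Qed.

Lemma Jdom_locally p c : Jdom p -> locally (p c) (fun t => Jdom (updJ p c t)).
Proof.
  intros Hp. exists (mkposreal _ (Jdom_abs_pos p Hp)). intros t Ht. now apply Jdom_upd_near.
Qed.

Lemma pdJ_ext_loc f g x y c : x c = y c -> Jdom x ->
  (forall t, Jdom (updJ x c t) -> f (updJ x c t) = g (updJ y c t)) -> pdJ c f x = pdJ c g y.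
Proof.
  intros Hc Hx Hfg. unfold pdJ, pd. rewrite <- Hc. apply Derive_ext_loc.
  destruct (Jdom_locally x c Hx) as [eps He]. exists eps. intros t Ht. apply Hfg, He, Ht.
Qed.

Lemma pdJ_ext_Jdom f g p c : (forall q, Jdom q -> f q = g q) -> Jdom p -> pdJ c f p = pdJ c g p.
Proof. intros Hfg Hp. apply pdJ_ext_loc; auto. Qed.

Lemma pdJ_order_gt (a : jet -> R) N c p : order_le cord N a -> (N < cord c)%nat -> pdJ c a p = 0.
Proof.
  intros Ha Hc. unfold pdJ, pd. rewrite (Derive_ext _ (fun _ => a p)) by
    (intros t; apply Ha; intros d Hd; rewrite upd_other; auto; intros ->; lia).
  apply Derive_const.
Qed.

Definition ind (c' c : coord) : R := if coord_eq_dec c' c then 1 else 0.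

Lemma is_derive_coord x c' c : is_derive (fun t => updJ x c' t c) (x c') (ind c' c).
Proof.
  unfold ind. destruct (coord_eq_dec c' c) as [->|Hne].
  - apply (is_derive_ext (fun t => t)); [intros t; now rewrite upd_same|]. auto_derive; [exact I|simpl; ring].
  - apply (is_derive_ext (fun _ => x c)); [intros t; now rewrite upd_other|]. auto_derive; [exact I|simpl; ring].
Qed.

Lemma pdJ_coord x c' c : pdJ c' (fun q => q c) x = ind c' c.
Proof. apply is_derive_unique, is_derive_coord. Qed.

Definition enum_coords (N : nat) : list coord :=
  Z1 :: Z2 :: map Q0 (seq 0 (S N)) ++ map Q1 (seq 0 (S N)).

Lemma enum_coords_NoDup N : NoDup (enum_coords N).
Proof.
  assert (Hmap : forall (h : nat -> coord), (forall a b, h a = h b -> a = b) ->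
            NoDup (map h (seq 0 (S N)))).
  { intros h Hh. apply FinFun.Injective_map_NoDup; [exact Hh | apply seq_NoDup]. }
  unfold enum_coords. constructor; [|constructor].
  - intros [H|H]; [discriminate|]. apply in_app_or in H.
    destruct H as [H|H]; apply in_map_iff in H; destruct H as [x [H _]]; discriminate.
  - intros H. apply in_app_or in H.
    destruct H as [H|H]; apply in_map_iff in H; destruct H as [x [H _]]; discriminate.
  - apply NoDup_app; [apply Hmap; congruence | apply Hmap; congruence|].
    intros x H1 H2. apply in_map_iff in H1. apply in_map_iff in H2.
    destruct H1 as [a [<- _]]. destruct H2 as [b [H _]]. discriminate.
Qed.

Lemma In_enum_coords N c : In c (enum_coords N) <-> (cord c <= N)%nat.
Proof.
  unfold enum_coords. cbn [In]. rewrite in_app_iff, !in_map_iff. split.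
  - intros [<-|[<-|[[k [<- Hk]]|[k [<- Hk]]]]]; simpl; try lia; apply in_seq in Hk; lia.
  - destruct c; cbn [cord]; intros H; auto; right; right; [left|right]; exists k; split; auto; apply in_seq; lia.
Qed.

Lemma sum_list_enum_coords N g : sum_list (enum_coords N) g =
  g Z1 + g Z2 + sum_f_R0 (fun k => g (Q0 k)) N + sum_f_R0 (fun k => g (Q1 k)) N.
Proof. unfold enum_coords. cbn [sum_list]. rewrite sum_list_app, !sum_list_map_seq. ring. Qed.

Lemma sum_list_ind_l (l : list coord) g c : NoDup l -> In c l -> sum_list l (fun c' => g c' * ind c' c) = g c.
Proof.
  induction l as [|a l IH]; simpl; [tauto|]. intros Hnd Hc. inversion Hnd as [|? ? Hnin Hnd']; subst.
  unfold ind at 1. destruct (coord_eq_dec a c) as [->|Hne].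
  - rewrite sum_list_zero; [ring|]. intros c' Hc'. unfold ind.
    destruct (coord_eq_dec c' c) as [->|]; [contradiction|ring].
  - rewrite IH; auto; [ring|]. destruct Hc; congruence.
Qed.

Lemma ind_neq c' c : c' <> c -> ind c' c = 0.
Proof. intros H. unfold ind. destruct (coord_eq_dec c' c); congruence. Qed.

Lemma ind_Q0 k m : ind (Q0 k) (Q0 m) = if Nat.eq_dec k m then 1 else 0.
Proof.
  unfold ind. destruct (coord_eq_dec (Q0 k) (Q0 m)) as [E|E], (Nat.eq_dec k m);
  try injection E as E; congruence.
Qed.

Lemma ind_Q1 k m : ind (Q1 k) (Q1 m) = if Nat.eq_dec k m then 1 else 0.
Proof.
  unfold ind. destruct (coord_eq_dec (Q1 k) (Q1 m)) as [E|E], (Nat.eq_dec k m);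
  try injection E as E; congruence.
Qed.

(** * Polynomials in the [q_{k,1}] and [1/q_{0,1}] *)

(* [PVar k] stands for [q_{k,1}] and [PInv] for [1/q_{0,1}]. *)
Inductive pexpr : Type :=
  | PConst (c : R) | PVar (k : nat) | PInv | PAdd (a b : pexpr) | PMul (a b : pexpr).

Fixpoint peval (e : pexpr) (p : jet) : R :=
  match e with
  | PConst c => c
  | PVar k => p (Q1 k)
  | PInv => / p (Q1 0)
  | PAdd a b => peval a p + peval b p
  | PMul a b => peval a p * peval b p
  end.

Fixpoint pderiv (k : nat) (e : pexpr) : pexpr :=
  match e with
  | PConst _ => PConst 0
  | PVar j => if Nat.eq_dec j k then PConst 1 else PConst 0
  | PInv => match k with O => PMul (PConst (-1)) (PMul PInv PInv) | S _ => PConst 0 end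
  | PAdd a b => PAdd (pderiv k a) (pderiv k b)
  | PMul a b => PAdd (PMul (pderiv k a) b) (PMul a (pderiv k b))
  end.

Fixpoint inv_free (e : pexpr) : Prop :=
  match e with
  | PInv => False
  | PAdd a b | PMul a b => inv_free a /\ inv_free b
  | _ => True
  end.

Fixpoint vars_le (n : nat) (e : pexpr) : Prop :=
  match e with
  | PVar j => (j <= n)%nat
  | PAdd a b | PMul a b => vars_le n a /\ vars_le n b
  | _ => True
  end.

Definition pderiv_coord (c : coord) (e : pexpr) (p : jet) : R :=
  match c with Q1 k => peval (pderiv k e) p | _ => 0 end.

Lemma peval_ext e p q : (forall k, p (Q1 k) = q (Q1 k)) -> peval e p = peval e q.
Proof. intros H. induction e; simpl; rewrite ?H, ?IHe1, ?IHe2; auto. Qed.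

Lemma peval_ext_le n e p q : vars_le n e ->
  (forall k, (k <= n)%nat -> p (Q1 k) = q (Q1 k)) -> peval e p = peval e q.
Proof.
  induction e; simpl; intros Hv H; try tauto; try (rewrite H; [reflexivity|lia]);
  destruct Hv; rewrite IHe1, IHe2; auto.
Qed.

Lemma inv_free_pderiv k e : inv_free e -> inv_free (pderiv k e).
Proof. induction e; simpl; try tauto. now destruct (Nat.eq_dec k0 k). Qed.

Lemma vars_le_pderiv n k e : vars_le n e -> vars_le n (pderiv k e).
Proof.
  induction e; simpl; try tauto.
  - now destruct (Nat.eq_dec k0 k).
  - now destruct k.
Qed.

Lemma vars_le_mono n m e : (n <= m)%nat -> vars_le n e -> vars_le m e.
Proof. induction e; simpl; intuition lia. Qed.

Lemma pderiv_vars_gt n k e p : vars_le n e -> (n < k)%nat -> peval (pderiv k e) p = 0.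
Proof.
  induction e; simpl; intros Hv Hk; auto.
  - destruct (Nat.eq_dec k0 k); [lia|reflexivity].
  - destruct k; [lia|reflexivity].
  - destruct Hv. rewrite IHe1, IHe2; auto. ring.
  - destruct Hv. rewrite IHe1, IHe2; auto. ring.
Qed.

Lemma peval_upd_vars_gt n k e p s : vars_le n e -> (n < k)%nat -> peval e (updJ p (Q1 k) s) = peval e p.
Proof.
  intros Hv Hk. apply (peval_ext_le n); auto.
  intros j Hj. apply upd_other. intros E. injection E. lia.
Qed.

Lemma pderiv_comm k i e p : peval (pderiv k (pderiv i e)) p = peval (pderiv i (pderiv k e)) p.
Proof.
  induction e; simpl.
  - reflexivity.
  - destruct (Nat.eq_dec k0 i), (Nat.eq_dec k0 k); reflexivity.
  - destruct i, k; simpl; ring.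
  - now rewrite IHe1, IHe2.
  - rewrite IHe1, IHe2. ring.
Qed.

Definition peval_defined (e : pexpr) (p : jet) : Prop := inv_free e \/ Jdom p.

Lemma is_derive_peval_Q1 e p k : peval_defined e p ->
  is_derive (fun t => peval e (updJ p (Q1 k) t)) (p (Q1 k)) (peval (pderiv k e) p).
Proof.
  induction e as [c|j| |a IHa b IHb|a IHa b IHb]; simpl; intros Hdef.
  - auto_derive; [exact I|simpl; ring].
  - pose proof (is_derive_coord p (Q1 k) (Q1 j)) as Hd. rewrite ind_Q1 in Hd.
    destruct (Nat.eq_dec j k), (Nat.eq_dec k j); try lia; exact Hd.
  - destruct Hdef as [[]|Hp]. destruct k as [|k].
    + apply (is_derive_ext (fun t => / t)); [intros t; now rewrite upd_same|].
      auto_derive; [exact Hp|]. simpl. field. exact Hp.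
    + apply (is_derive_ext (fun _ => / p (Q1 0))); [|auto_derive; [exact I|simpl; ring]].
      intros t. rewrite upd_other; [reflexivity|]. intros E. discriminate.
  - assert (Ha : peval_defined a p /\ peval_defined b p) by (destruct Hdef as [[]|]; unfold peval_defined; tauto).
    exact (is_derive_plus _ _ _ _ _ (IHa (proj1 Ha)) (IHb (proj2 Ha))).
  - assert (Ha : peval_defined a p /\ peval_defined b p) by (destruct Hdef as [[]|]; unfold peval_defined; tauto).
    pose proof (is_derive_mult _ _ _ _ _ (IHa (proj1 Ha)) (IHb (proj2 Ha)) Rmult_comm) as Hm.
    simpl in Hm. rewrite upd_id in Hm. exact Hm.
Qed.

Lemma is_derive_peval e p c : peval_defined e p ->
  is_derive (fun t => peval e (updJ p c t)) (p c) (pderiv_coord c e p).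
Proof.
  intros Hdef. destruct c; simpl; try now apply is_derive_peval_Q1.
  all: apply (is_derive_ext (fun _ => peval e p)); [|auto_derive; [exact I|simpl; ring]];
       intros t; apply peval_ext; intros j; rewrite upd_other; [reflexivity|discriminate].
Qed.

Lemma pdJ_peval e p c : peval_defined e p -> pdJ c (peval e) p = pderiv_coord c e p.
Proof. intros H. apply is_derive_unique, is_derive_peval, H. Qed.

Lemma pderiv_ext_Jdom a b k p :
  (forall q, Jdom q -> peval a q = peval b q) -> Jdom p -> peval (pderiv k a) p = peval (pderiv k b) p.
Proof.
  intros Hab Hp. change (pderiv_coord (Q1 k) a p = pderiv_coord (Q1 k) b p).
  rewrite <- (pdJ_peval a p (Q1 k)), <- (pdJ_peval b p (Q1 k)) by (now right).
  now apply pdJ_ext_Jdom.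
Qed.

Fixpoint psum (n : nat) (F : nat -> pexpr) : pexpr :=
  match n with O => F O | S m => PAdd (psum m F) (F (S m)) end.

Lemma peval_psum n F p : peval (psum n F) p = sum_f_R0 (fun i => peval (F i) p) n.
Proof. induction n; simpl; auto. now rewrite IHn. Qed.

Lemma pderiv_psum k n F p : peval (pderiv k (psum n F)) p = sum_f_R0 (fun i => peval (pderiv k (F i)) p) n.
Proof. induction n; simpl; auto. now rewrite IHn. Qed.

Lemma vars_le_psum m n F : (forall i, (i <= n)%nat -> vars_le m (F i)) -> vars_le m (psum n F).
Proof. induction n; simpl; intros H; [auto | split; [apply IHn|apply H]; auto]. Qed.

Lemma inv_free_psum n F : (forall i, (i <= n)%nat -> inv_free (F i)) -> inv_free (psum n F).
Proof. induction n; simpl; intros H; [auto | split; [apply IHn|apply H]; auto]. Qed.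

(** * The invariants [D_1^j I^1] *)

(* [D_1] on polynomials in [q_{0,1}, ..., q_{n,1}], using [D_1 q_{k,1} = q_{k+1,1}]. *)
Definition pD1 (n : nat) (e : pexpr) : pexpr := psum n (fun k => PMul (PVar (S k)) (pderiv k e)).

(* [D_1^j I^1 = q_{j+1,0} + DIpoly j]. *)
Fixpoint DIpoly (j : nat) : pexpr :=
  match j with
  | O => PMul (PConst (/2)) (PMul (PVar 0) (PVar 0))
  | S j' => pD1 j' (DIpoly j')
  end.

(* [q_{j,2} = q2poly j] on [Jdom]. *)
Fixpoint q2poly (j : nat) : pexpr :=
  match j with
  | O => PMul (PConst (-1)) (PMul (PVar 1) PInv)
  | S j' => pD1 (S j') (q2poly j')
  end.

(* [\hat D_2] on polynomials in [q_{0,1}, ..., q_{n,1}], using [\hat D_2 q_{k,1} = q_{k,2}]. *)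
Definition pD2 (n : nat) (e : pexpr) : pexpr := psum n (fun k => PMul (q2poly k) (pderiv k e)).

Lemma peval_pD1 n e p : peval (pD1 n e) p = sum_f_R0 (fun k => p (Q1 (S k)) * peval (pderiv k e) p) n.
Proof. apply peval_psum. Qed.

Lemma peval_pD2 n e p : peval (pD2 n e) p = sum_f_R0 (fun k => peval (q2poly k) p * peval (pderiv k e) p) n.
Proof. apply peval_psum. Qed.

Lemma vars_le_pD1 n m e : vars_le n e -> (m <= n)%nat -> vars_le (S n) (pD1 m e).
Proof.
  intros Hv Hm. apply vars_le_psum. intros i Hi. simpl. split; [lia|].
  apply vars_le_pderiv. apply (vars_le_mono n); [lia|exact Hv].
Qed.

Lemma vars_le_DIpoly j : vars_le j (DIpoly j).
Proof. induction j; [simpl; repeat split; auto|]. now apply vars_le_pD1. Qed.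

Lemma inv_free_DIpoly j : inv_free (DIpoly j).
Proof.
  induction j; simpl; [tauto|]. apply inv_free_psum. intros i _. simpl. split; [exact I|].
  now apply inv_free_pderiv.
Qed.

Lemma vars_le_q2poly j : vars_le (S j) (q2poly j).
Proof. induction j; [simpl; repeat split; auto|]. now apply vars_le_pD1. Qed.

Lemma pD1_bound a e m1 m2 p : vars_le a e -> (a <= m1)%nat -> (a <= m2)%nat ->
  peval (pD1 m1 e) p = peval (pD1 m2 e) p.
Proof.
  intros Hv H1 H2.
  assert (Htail : forall m, (a <= m)%nat -> peval (pD1 m e) p = peval (pD1 a e) p).
  { intros m Hm. rewrite !peval_pD1. apply sum_f_R0_tail0; [|exact Hm].
    intros k Hk. rewrite (pderiv_vars_gt a) by (auto; lia). ring. }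
  now rewrite (Htail m1 H1), (Htail m2 H2).
Qed.

Lemma pdJ_Q0_peval e m c p : inv_free e ->
  pdJ c (fun q => q (Q0 m) + peval e q) p = ind c (Q0 m) + pderiv_coord c e p.
Proof.
  intros He. apply is_derive_unique.
  apply (is_derive_plus _ _ _ _ _ (is_derive_coord p c (Q0 m)) (is_derive_peval e p c (or_introl He))).
Qed.

Lemma DI_eq j : DI j = fun q => q (Q0 (S j)) + peval (DIpoly j) q.
Proof.
  apply functional_extensionality. intros p. revert p. induction j; intros p.
  - simpl. unfold I1. field.
  - change (DI (S j) p) with (Dh1 (S j) (DI j) p). unfold Dh1.
    rewrite (functional_extensionality _ _ IHj).
    rewrite pdJ_Q0_peval by apply inv_free_DIpoly.
    rewrite (sum_eq _ (fun k => (if Nat.eq_dec k (S j) then 1 else 0) * p (Q0 (S k))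
                              + p (Q1 (S k)) * peval (pderiv k (DIpoly j)) p)).
    2:{ intros k _. rewrite !pdJ_Q0_peval, ind_Q0, ind_neq by (apply inv_free_DIpoly || discriminate).
        simpl. ring. }
    rewrite sum_plus, sum_f_R0_delta by lia.
    change (peval (DIpoly (S j)) p) with (peval (pD1 j (DIpoly j)) p).
    rewrite (pD1_bound j (DIpoly j) j (S j)), peval_pD1 by (apply vars_le_DIpoly || lia).
    rewrite ind_neq by discriminate. cbn [pderiv_coord]. ring.
Qed.

Lemma q2_eq j p : Jdom p -> q2 j p = peval (q2poly j) p.
Proof.
  revert p. induction j; intros p Hp.
  - simpl. unfold q02, Rdiv. ring.
  - change (q2 (S j) p) with (Dh1 (S j) (q2 j) p). unfold Dh1.
    assert (Hpd : forall c, pdJ c (q2 j) p = pderiv_coord c (q2poly j) p).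
    { intros c. rewrite (pdJ_ext_Jdom _ (peval (q2poly j))) by auto. apply pdJ_peval. now right. }
    change (peval (q2poly (S j)) p) with (peval (pD1 (S j) (q2poly j)) p).
    rewrite Hpd, peval_pD1. cbn [pderiv_coord]. rewrite Rplus_0_l.
    apply sum_eq. intros k _. rewrite !Hpd. cbn [pderiv_coord]. ring.
Qed.

Lemma pD1_ext_Jdom m a b p :
  (forall q, Jdom q -> peval a q = peval b q) -> Jdom p -> peval (pD1 m a) p = peval (pD1 m b) p.
Proof. intros Hab Hp. rewrite !peval_pD1. apply sum_eq. intros k _. now rewrite (pderiv_ext_Jdom a b). Qed.

Lemma pD2_ext_Jdom n a b p :
  (forall q, Jdom q -> peval a q = peval b q) -> Jdom p -> peval (pD2 n a) p = peval (pD2 n b) p.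
Proof. intros Hab Hp. rewrite !peval_pD2. apply sum_eq. intros k _. now rewrite (pderiv_ext_Jdom a b). Qed.

Lemma pderiv_pD1 k m e p : peval (pderiv k (pD1 m e)) p =
  sum_f_R0 (fun i => (if Nat.eq_dec (S i) k then 1 else 0) * peval (pderiv i e) p
                     + p (Q1 (S i)) * peval (pderiv k (pderiv i e)) p) m.
Proof.
  unfold pD1. rewrite pderiv_psum. apply sum_eq. intros i _. cbn [pderiv peval].
  destruct (Nat.eq_dec (S i) k); simpl; ring.
Qed.

Lemma pderiv_pD2 i n e p : peval (pderiv i (pD2 n e)) p =
  sum_f_R0 (fun k => peval (pderiv i (q2poly k)) p * peval (pderiv k e) p
                     + peval (q2poly k) p * peval (pderiv i (pderiv k e)) p) n.
Proof. unfold pD2. rewrite pderiv_psum. reflexivity. Qed.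

Lemma pD1_q2poly k m p : (S k <= m)%nat ->
  sum_f_R0 (fun i => p (Q1 (S i)) * peval (pderiv i (q2poly k)) p) m = peval (q2poly (S k)) p.
Proof.
  intros Hkm. rewrite <- peval_pD1. change (q2poly (S k)) with (pD1 (S k) (q2poly k)).
  apply (pD1_bound (S k)); auto using vars_le_q2poly.
Qed.

(* The commutation rests on [D_1 q_{k,2} = q_{k+1,2}] ([pD1_q2poly]). *)
Lemma pD2_pD1_comm a n m e p : vars_le a e -> (a < n)%nat -> (n < m)%nat ->
  peval (pD2 n (pD1 m e)) p = peval (pD1 m (pD2 n e)) p.
Proof.
  intros Hv Han Hnm.
  set (d := fun i => peval (pderiv i e) p).
  set (Q := fun k => peval (q2poly k) p).
  set (cross := sum_f_R0 (fun k => sum_f_R0 (fun i =>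
                  Q k * p (Q1 (S i)) * peval (pderiv k (pderiv i e)) p) m) n).
  assert (Hlhs : peval (pD2 n (pD1 m e)) p =
                 sum_f_R0 (fun k => match k with O => 0 | S k' => Q (S k') * d k' end) n + cross).
  { rewrite peval_pD2. unfold cross. rewrite <- sum_plus. apply sum_eq. intros k Hk.
    rewrite pderiv_pD1, sum_plus, Rmult_plus_distr_l, sum_f_R0_shift_delta, sum_f_R0_scal_l by lia.
    f_equal; [destruct k; unfold Q, d; ring|]. apply sum_eq. intros; unfold Q; ring. }
  assert (Hrhs : peval (pD1 m (pD2 n e)) p = sum_f_R0 (fun k => Q (S k) * d k) n + cross).
  { rewrite peval_pD1.
    rewrite (sum_eq _ (fun i => sum_f_R0 (fun k => p (Q1 (S i)) * peval (pderiv i (q2poly k)) p * d k) n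
               + sum_f_R0 (fun k => Q k * p (Q1 (S i)) * peval (pderiv k (pderiv i e)) p) n)).
    2:{ intros i _. rewrite pderiv_pD2, sum_f_R0_scal_l, <- sum_plus. apply sum_eq. intros k _.
        rewrite (pderiv_comm i k). unfold d, Q. ring. }
    rewrite sum_plus, !(sum_f_R0_swap _ m n). unfold cross. f_equal. apply sum_eq. intros k Hk.
    unfold Q. rewrite <- (pD1_q2poly k m p) by lia. rewrite Rmult_comm, scal_sum. apply sum_eq. intros; ring. }
  rewrite Hlhs, Hrhs, <- (sum_f_R0_shift (fun k => Q (S k) * d k) n).
  unfold d. rewrite (pderiv_vars_gt a) by assumption. ring.
Qed.

(* Equivalently [\hat D_2 (D_1^j I^1) = 0], as [\hat D_2 q_{j+1,0} = q_{j+1,1}]. *)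
Lemma pD2_DIpoly j n p : (j <= n)%nat -> Jdom p -> peval (pD2 n (DIpoly j)) p = - p (Q1 (S j)).
Proof.
  revert n p. induction j; intros n p Hjn Hp.
  - rewrite peval_pD2, (sum_f_R0_tail0 _ 0 n) by
      (lia || (intros k Hk; rewrite (pderiv_vars_gt 0 k (DIpoly 0)) by (simpl; lia); ring)).
    simpl. field. exact Hp.
  - change (DIpoly (S j)) with (pD1 j (DIpoly j)).
    rewrite (pD2_ext_Jdom n _ (pD1 (S n) (DIpoly j))) by
      (auto; intros q _; apply (pD1_bound j); auto using vars_le_DIpoly; lia).
    rewrite (pD2_pD1_comm j) by (auto using vars_le_DIpoly; lia).
    rewrite (pD1_ext_Jdom _ _ (PMul (PConst (-1)) (PVar (S j)))) by
      (auto; intros q Hq; simpl; rewrite IHj by (auto; lia); ring).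
    rewrite peval_pD1, (sum_eq _ (fun i => (if Nat.eq_dec i (S j) then 1 else 0) * - p (Q1 (S i)))).
    + apply sum_f_R0_delta. lia.
    + intros i _. cbn [pderiv peval]. destruct (Nat.eq_dec (S j) i), (Nat.eq_dec i (S j)); try lia; simpl; ring.
Qed.

Lemma pdJ_DI j c p : pdJ c (DI j) p = ind c (Q0 (S j)) + pderiv_coord c (DIpoly j) p.
Proof. rewrite DI_eq. apply pdJ_Q0_peval, inv_free_DIpoly. Qed.

Lemma Dh2_DI j M p : (S j <= M)%nat -> Jdom p -> Dh2 M (DI j) p = 0.
Proof.
  intros HM Hp. unfold Dh2.
  rewrite (sum_eq _ (fun k => (if Nat.eq_dec k (S j) then 1 else 0) * p (Q1 k)
                             + peval (q2poly k) p * peval (pderiv k (DIpoly j)) p)).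
  2:{ intros k _. rewrite !pdJ_DI, ind_Q0, ind_neq, q2_eq by (auto || discriminate). simpl. ring. }
  rewrite sum_plus, sum_f_R0_delta, <- peval_pD2, pD2_DIpoly by lia || auto.
  rewrite pdJ_DI, ind_neq by discriminate. simpl. ring.
Qed.

(** * Functions of the invariants are [z_2]-integrals *)

Definition Dh2_coeff (p : jet) (c : coord) : R :=
  match c with Z1 => 0 | Z2 => 1 | Q0 k => p (Q1 k) | Q1 k => q2 k p end.

Lemma Dh2_sum_list K a p : Dh2 K a p = sum_list (enum_coords K) (fun c => Dh2_coeff p c * pdJ c a p).
Proof. rewrite sum_list_enum_coords. unfold Dh2. rewrite sum_plus. cbn [Dh2_coeff]. ring. Qed.

Lemma Dh2_order_le (a : jet -> R) N K p : order_le cord N a -> (N <= K)%nat -> Dh2 N a p = Dh2 K a p.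
Proof.
  intros Ha HK. induction HK; [reflexivity|]. rewrite IHHK. unfold Dh2. rewrite tech5.
  rewrite (pdJ_order_gt a N (Q0 (S m))), (pdJ_order_gt a N (Q1 (S m))) by (auto; simpl; lia). ring.
Qed.

Lemma is_derive_args p c i :
  is_derive (fun t => args (updJ p c t) i) (p c) (pdJ c (fun q => args q i) p).
Proof.
  apply Derive_correct. destruct i as [|j]; simpl.
  - eexists. apply is_derive_coord.
  - rewrite DI_eq. eexists. apply (is_derive_plus _ _ _ _ _ (is_derive_coord p c (Q0 (S j)))
      (is_derive_peval (DIpoly j) p c (or_introl (inv_free_DIpoly j)))).
Qed.

Lemma Dh2_args i K p : (i <= K)%nat -> Jdom p -> Dh2 K (fun q => args q i) p = 0.
Proof.
  intros HiK Hp. destruct i as [|j]; [|now apply Dh2_DI].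
  unfold Dh2. cbn [args]. rewrite pdJ_coord, ind_neq by discriminate.
  rewrite sum_eq_R0; [ring|]. intros k _. rewrite !pdJ_coord, !ind_neq by discriminate. ring.
Qed.

Section LocalRepresentation.
Variables (N r M : nat) (d e : R) (alpha : jet -> R) (F : (nat -> R) -> R) (p : jet).
Hypotheses (Hd : 0 < d) (He : 0 < e) (Hp : Jdom p).
Hypothesis HFord : order_le (fun i : nat => i) (S r) F.
Hypothesis HFsmooth :
  smooth_on PeanoNat.Nat.eq_dec (fun i : nat => i) (fun x => near_ord (fun i : nat => i) (S r) e (args p) x) F.
Hypothesis Hrep : forall p', Jdom p' -> near_ord cord M d p p' ->
  near_ord (fun i : nat => i) (S r) e (args p) (args p') /\ alpha p' = F (args p').

Lemma pdJ_local_rep c : pdJ c alpha p =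
  sum_list (seq 0 (S (S r))) (fun i => pd PeanoNat.Nat.eq_dec i F (args p) * pdJ c (fun q => args q i) p).
Proof.
  destruct (smooth_on_partials _ _ _ _ HFsmooth) as [HFpart HFcont].
  assert (Hrad : 0 < Rmin d (Rabs (p (Q1 0)))) by (apply Rmin_pos; auto; now apply Jdom_abs_pos).
  transitivity (pdJ c (fun q => F (args q)) p).
  { unfold pdJ, pd. apply Derive_ext_loc. exists (mkposreal _ Hrad). intros t Ht.
    change (Rabs (t - p c) < Rmin d (Rabs (p (Q1 0)))) in Ht.
    pose proof (Rmin_l d (Rabs (p (Q1 0)))). pose proof (Rmin_r d (Rabs (p (Q1 0)))).
    apply Hrep; [apply Jdom_upd_near; auto; lra|].
    intros c' _. unfold upd. destruct (coord_eq_dec c' c) as [->|]; [lra|]. now rewrite Rminus_diag, Rabs_R0. }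
  apply is_derive_unique.
  pose proof (is_derive_comp_order PeanoNat.Nat.eq_dec (fun i : nat => i) F (S r) (S r) e
    (fun x => near_ord (fun i : nat => i) (S r) e (args p) x) (fun t => args (updJ p c t))
    (fun i => pdJ c (fun q => args q i) p) (seq 0 (S (S r))) (p c)) as Hchain.
  cbv beta in Hchain. rewrite upd_id in Hchain. apply Hchain.
  - exact HFord.
  - exact He.
  - auto.
  - exact HFpart.
  - intros i _. apply HFcont.
  - apply seq_NoDup.
  - intros i Hi. apply in_seq. lia.
  - intros i. apply is_derive_args.
Qed.

Lemma Dh2_zero_of_local_rep : order_le cord N alpha -> Dh2 N alpha p = 0.
Proof.
  intros Hord. rewrite (Dh2_order_le alpha N (Nat.max N (S r))), Dh2_sum_list by (auto; lia).
  rewrite (sum_list_ext _ _ (fun c => sum_list (seq 0 (S (S r)))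
             (fun i => pd PeanoNat.Nat.eq_dec i F (args p) * (Dh2_coeff p c * pdJ c (fun q => args q i) p)))).
  2:{ intros c _. rewrite pdJ_local_rep, sum_list_scal. apply sum_list_ext. intros; ring. }
  rewrite sum_list_swap. apply sum_list_zero. intros i Hi. apply in_seq in Hi.
  rewrite <- sum_list_scal, <- Dh2_sum_list, Dh2_args by (auto; lia). ring.
Qed.

End LocalRepresentation.

(** * [z_2]-integrals are functions of the invariants *)

(* In the coordinates [Psi p] the [q_{j+1,0}]-coordinate becomes [D_1^j I^1]; [Phi] is the inverse change. *)
Definition Phi (x : jet) : jet := fun c =>
  match c with Q0 (S j) => x (Q0 (S j)) - peval (DIpoly j) x | _ => x c end.
Definition Psi (x : jet) : jet := fun c =>
  match c with Q0 (S j) => x (Q0 (S j)) + peval (DIpoly j) x | _ => x c end.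

Lemma Phi_Psi x : Phi (Psi x) = x.
Proof.
  apply functional_extensionality. intros [| |[|j]|k]; simpl; auto.
  rewrite (peval_ext (DIpoly j) (Psi x) x) by reflexivity. ring.
Qed.

Lemma Psi_Q0 j p : Psi p (Q0 (S j)) = DI j p.
Proof. now rewrite DI_eq. Qed.

Lemma is_derive_Phi_Q0 x c' j : is_derive (fun t => Phi (updJ x c' t) (Q0 (S j))) (x c')
  (ind c' (Q0 (S j)) - pderiv_coord c' (DIpoly j) x).
Proof.
  apply (is_derive_minus _ _ _ _ _ (is_derive_coord x c' (Q0 (S j)))
    (is_derive_peval (DIpoly j) x c' (or_introl (inv_free_DIpoly j)))).
Qed.

Lemma is_derive_Phi x c' c : is_derive (fun t => Phi (updJ x c' t) c) (x c') (pdJ c' (fun q => Phi q c) x).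
Proof.
  apply Derive_correct. destruct c as [| |[|j]|k]; eexists.
  1-3,5: exact (is_derive_coord x c' _).
  apply is_derive_Phi_Q0.
Qed.

Lemma pdJ_Phi_Q0 x c' j :
  pdJ c' (fun q => Phi q (Q0 (S j))) x = ind c' (Q0 (S j)) - pderiv_coord c' (DIpoly j) x.
Proof. apply is_derive_unique, is_derive_Phi_Q0. Qed.

Lemma pdJ_Phi_other x c' c : (forall j, c <> Q0 (S j)) -> pdJ c' (fun q => Phi q c) x = ind c' c.
Proof.
  intros Hc. rewrite <- (pdJ_coord x c' c). unfold pdJ, pd. apply Derive_ext. intros t.
  destruct c as [| |[|j]|k]; auto. now destruct (Hc j).
Qed.

Lemma Dh2_coeff_Phi x c : Jdom x -> Dh2_coeff (Phi x) c = Dh2_coeff x c.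
Proof.
  intros Hx. destruct c as [| | k | k]; cbn [Dh2_coeff]; [reflexivity..|].
  rewrite !q2_eq by exact Hx. now apply peval_ext.
Qed.

(* The vector field that [\hat D_2] becomes in the coordinates [Psi]. *)
Definition W_coeff (x : jet) (c : coord) : R :=
  match c with Z2 => 1 | Q0 O => x (Q1 0) | Q1 k => q2 k x | _ => 0 end.

Lemma W_sum_list N x w : sum_list (enum_coords N) (fun c => W_coeff x c * w c) =
  w Z2 + x (Q1 0) * w (Q0 0) + sum_f_R0 (fun k => q2 k x * w (Q1 k)) N.
Proof.
  rewrite sum_list_enum_coords, (sum_f_R0_tail0 _ 0 N).
  - cbn [W_coeff sum_f_R0]. ring.
  - intros [|k] Hk; [lia|]. cbn [W_coeff]. ring.
  - lia.
Qed.

Lemma W_Phi N x c : Jdom x -> (cord c <= N)%nat ->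
  sum_list (enum_coords N) (fun c' => W_coeff x c' * pdJ c' (fun q => Phi q c) x) = Dh2_coeff x c.
Proof.
  intros Hx Hc. destruct c as [| |[|j]|k].
  4:{ rewrite W_sum_list, !pdJ_Phi_Q0, !ind_neq by discriminate.
      rewrite (sum_eq _ (fun k => - (peval (q2poly k) x * peval (pderiv k (DIpoly j)) x))).
      2:{ intros k _. rewrite pdJ_Phi_Q0, ind_neq, q2_eq by (auto || discriminate). simpl. ring. }
      rewrite sum_f_R0_opp, <- peval_pD2, pD2_DIpoly by (auto; simpl in Hc; lia). simpl. ring. }
  all: rewrite (sum_list_ext _ _ (fun c' => W_coeff x c' * ind c' _)) by
         (intros c' _; rewrite pdJ_Phi_other; [reflexivity | intros j E; discriminate]).
  all: rewrite sum_list_ind_l by (apply enum_coords_NoDup || now apply In_enum_coords).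
  all: reflexivity.
Qed.

Lemma q2poly_upd_next m : forall x s, Jdom x ->
  peval (q2poly m) (updJ x (Q1 (S m)) s) = peval (q2poly m) x - (s - x (Q1 (S m))) / x (Q1 0).
Proof.
  induction m; intros x s Hx.
  - cbn [q2poly peval]. rewrite upd_same, (upd_other _ _ _ (Q1 0)) by discriminate. field. exact Hx.
  - assert (Hslope : peval (pderiv (S m) (q2poly m)) x = - / x (Q1 0)).
    { pose proof (is_derive_peval_Q1 (q2poly m) x (S m) (or_intror Hx)) as H1.
      assert (H2 : is_derive (fun t => peval (q2poly m) (updJ x (Q1 (S m)) t)) (x (Q1 (S m))) (- / x (Q1 0))).
      { apply (is_derive_ext (fun t => peval (q2poly m) x - (t - x (Q1 (S m))) / x (Q1 0))).
        - intros t. now rewrite IHm.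
        - auto_derive; [exact I|]. field. exact Hx. }
      apply is_derive_unique in H1, H2. congruence. }
    change (q2poly (S m)) with (pD1 (S m) (q2poly m)). rewrite !peval_pD1, !tech5, upd_same.
    rewrite (peval_upd_vars_gt (S m)) by (apply vars_le_pderiv, vars_le_q2poly || lia).
    rewrite (sum_eq (fun k => updJ x (Q1 (S (S m))) s (Q1 (S k)) *
                              peval (pderiv k (q2poly m)) (updJ x (Q1 (S (S m))) s))
                    (fun k => x (Q1 (S k)) * peval (pderiv k (q2poly m)) x)).
    + rewrite Hslope. field. exact Hx.
    + intros i Hi. rewrite upd_other by (intros E; injection E; lia).
      rewrite (peval_upd_vars_gt (S m)) by (apply vars_le_pderiv, vars_le_q2poly || lia). reflexivity.
Qed.

Lemma Rmult_pos_between a b u : 0 < a * b -> Rmin a b <= u <= Rmax a b -> 0 < u * a.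
Proof.
  intros Hab Hu. unfold Rmin, Rmax in Hu.
  destruct (Rtotal_order a 0) as [Ha|[->|Ha]]; [|lra|].
  - assert (b < 0) by nra. destruct (Rle_dec a b); nra.
  - assert (0 < b) by nra. destruct (Rle_dec a b); nra.
Qed.

Section ForwardDirection.
Variables (N : nat) (alpha : jet -> R).
Hypotheses (Hord : order_le cord N alpha) (Hsm : smooth_on coord_eq_dec cord Jdom alpha).

Definition beta (x : jet) : R := alpha (Phi x).

Lemma beta_order_le : order_le cord N beta.
Proof.
  intros x y Hxy. apply Hord. intros [| |[|j]|k] Hc; simpl; try (apply Hxy; auto).
  rewrite Hxy by auto. f_equal. apply (peval_ext_le j); [apply vars_le_DIpoly|].
  intros k Hk. apply Hxy. simpl in *. lia.
Qed.

Lemma alpha_beta y : alpha y = beta (Psi y).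
Proof. unfold beta. now rewrite Phi_Psi. Qed.

Lemma is_derive_beta x c' : Jdom x ->
  is_derive (fun t => beta (updJ x c' t)) (x c')
    (sum_list (enum_coords N) (fun c => pdJ c alpha (Phi x) * pdJ c' (fun q => Phi q c) x)).
Proof.
  intros Hx. destruct (smooth_on_partials _ _ _ _ Hsm) as [Hpart Hcont].
  pose proof (is_derive_comp_order coord_eq_dec cord alpha N 0 (Rabs (x (Q1 0))) Jdom
     (fun t => Phi (updJ x c' t)) (fun c => pdJ c' (fun q => Phi q c) x) (enum_coords N) (x c') Hord) as Hc.
  cbv beta in Hc. rewrite upd_id in Hc. apply Hc.
  - now apply Jdom_abs_pos.
  - intros y Hy. now apply (Jdom_near (Phi x)).
  - exact Hpart.
  - intros c _. apply Hcont.
  - apply enum_coords_NoDup.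
  - intros c. apply In_enum_coords.
  - intros c. apply is_derive_Phi.
Qed.

Lemma pdJ_beta x c' : Jdom x ->
  pdJ c' beta x = sum_list (enum_coords N) (fun c => pdJ c alpha (Phi x) * pdJ c' (fun q => Phi q c) x).
Proof. intros Hx. now apply is_derive_unique, is_derive_beta. Qed.

Lemma beta_partials : has_partials_on coord_eq_dec Jdom beta.
Proof. intros c x Hx. eexists. now apply is_derive_beta. Qed.

Lemma beta_line y c a b :
  (forall u, Rmin a b <= u <= Rmax a b -> Jdom (updJ y c u)) ->
  (forall z, Jdom z -> pdJ c beta z = 0) -> beta (updJ y c a) = beta (updJ y c b).
Proof.
  intros Hseg Hz. apply (line_const coord_eq_dec Jdom); [exact beta_partials|].
  intros u Hu. split; [auto | apply Hz; auto].
Qed.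

Lemma pdJ_beta_upd_indep c x s c' : c' <> c -> Jdom x ->
  (forall y s, Jdom y -> beta (updJ y c s) = beta y) -> pdJ c' beta (updJ x c s) = pdJ c' beta x.
Proof.
  intros Hc' Hx Hind. symmetry. apply pdJ_ext_loc; [now rewrite upd_other | exact Hx|].
  intros t Ht. rewrite upd_comm by congruence. now rewrite Hind.
Qed.

Lemma beta_upd_Q1 k : (1 <= k)%nat -> ((N < k)%nat \/ forall z, Jdom z -> pdJ (Q1 k) beta z = 0) ->
  forall y s, Jdom y -> beta (updJ y (Q1 k) s) = beta y.
Proof.
  intros Hk [HN|Hz] y s Hy.
  - apply beta_order_le. intros c Hc. rewrite upd_other; [reflexivity|]. intros ->. simpl in Hc. lia.
  - rewrite <- (upd_id coord_eq_dec y (Q1 k)) at 2. apply beta_line; [|exact Hz].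
    intros u _. apply Jdom_upd_other; [intros E; injection E; lia | exact Hy].
Qed.

Hypothesis Hdh : forall p, Jdom p -> Dh2 N alpha p = 0.

Lemma W_beta x : Jdom x -> sum_list (enum_coords N) (fun c' => W_coeff x c' * pdJ c' beta x) = 0.
Proof.
  intros Hx. set (A := fun c => pdJ c alpha (Phi x)).
  rewrite (sum_list_ext _ _ (fun c' => sum_list (enum_coords N)
             (fun c => A c * (W_coeff x c' * pdJ c' (fun q => Phi q c) x)))).
  2:{ intros c' _. rewrite pdJ_beta, sum_list_scal by exact Hx.
      apply sum_list_ext. intros; unfold A; ring. }
  rewrite sum_list_swap, <- (Hdh (Phi x) Hx), Dh2_sum_list. apply sum_list_ext. intros c Hc.
  rewrite <- sum_list_scal, W_Phi, Dh2_coeff_Phi by (auto; now apply In_enum_coords). unfold A; ring.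
Qed.

Lemma W_beta_expanded x : Jdom x ->
  pdJ Z2 beta x + x (Q1 0) * pdJ (Q0 0) beta x + sum_f_R0 (fun k => q2 k x * pdJ (Q1 k) beta x) N = 0.
Proof. intros Hx. rewrite <- (W_sum_list N x (fun c => pdJ c beta x)). now apply W_beta. Qed.


(* Shifting [q_{m+1,1}] changes only the coefficient [q_{m,2}] in the transported identity. *)
Lemma pdJ_beta_Q1_step m : (m <= N)%nat ->
  (forall z, Jdom z -> forall k, (m < k <= N)%nat -> pdJ (Q1 k) beta z = 0) ->
  forall x, Jdom x -> pdJ (Q1 m) beta x = 0.
Proof.
  intros HmN Hhi x Hx.
  set (x' := updJ x (Q1 (S m)) (x (Q1 (S m)) + 1)).
  assert (Hx' : Jdom x') by (apply Jdom_upd_other; [discriminate | exact Hx]).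
  assert (Hind : forall y s, Jdom y -> beta (updJ y (Q1 (S m)) s) = beta y).
  { apply beta_upd_Q1; [lia|]. destruct (Compare_dec.le_lt_dec (S m) N) as [Hle|Hlt].
    - right. intros z Hz. apply Hhi; [exact Hz | lia].
    - now left. }
  assert (Htrunc : forall y, Jdom y -> sum_f_R0 (fun k => q2 k y * pdJ (Q1 k) beta y) N =
                                      sum_f_R0 (fun k => q2 k y * pdJ (Q1 k) beta y) m).
  { intros y Hy. apply sum_f_R0_tail0; [|exact HmN]. intros k Hk. rewrite Hhi by (auto; lia). ring. }
  pose proof (W_beta_expanded x Hx) as I1. pose proof (W_beta_expanded x' Hx') as I2.
  rewrite Htrunc in I1, I2 by assumption. unfold x' in I2.
  rewrite !pdJ_beta_upd_indep in I2 by (discriminate || auto).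
  rewrite (sum_eq _ (fun k => q2 k x * pdJ (Q1 k) beta x
              + (if Nat.eq_dec k m then 1 else 0) * (- / x (Q1 0) * pdJ (Q1 k) beta x))) in I2.
  2:{ intros k Hk. rewrite pdJ_beta_upd_indep by (auto; intros E; injection E; lia).
      rewrite !q2_eq by auto. destruct (Nat.eq_dec k m) as [->|Hne].
      - rewrite q2poly_upd_next by exact Hx. unfold Rdiv. ring.
      - rewrite (peval_upd_vars_gt (S k)) by (apply vars_le_q2poly || lia). ring. }
  rewrite upd_other in I2 by discriminate.
  rewrite sum_plus, sum_f_R0_delta in I2 by lia.
  assert (E : - / x (Q1 0) * pdJ (Q1 m) beta x = 0) by lra.
  apply Rmult_integral in E as [E|E]; [|exact E].
  exfalso. apply (Rinv_neq_0_compat (x (Q1 0))); [exact Hx | lra].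
Qed.

Lemma pdJ_beta_Q1 k x : (k <= N)%nat -> Jdom x -> pdJ (Q1 k) beta x = 0.
Proof.
  assert (Hdown : forall i k, (N - i <= k <= N)%nat -> forall x, Jdom x -> pdJ (Q1 k) beta x = 0).
  { induction i; intros k' Hk'; apply pdJ_beta_Q1_step; try lia.
    intros z Hz k'' Hk''. apply IHi; [lia | exact Hz]. }
  intros Hk. apply (Hdown N). lia.
Qed.

Lemma beta_scale_Q1_0 y s : Jdom y -> 0 < y (Q1 0) * s -> beta (updJ y (Q1 0) s) = beta y.
Proof.
  intros Hy Hs. rewrite <- (upd_id coord_eq_dec y (Q1 0)) at 2. symmetry. apply beta_line.
  - intros u Hu. unfold Jdom. rewrite upd_same. intros E.
    pose proof (Rmult_pos_between _ _ _ Hs Hu). rewrite E in *. lra.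
  - intros z Hz. now apply pdJ_beta_Q1; [lia|].
Qed.

(* Doubling [q_{0,1}] leaves [beta] unchanged but doubles the coefficient of the [q_{0,0}]-derivative. *)
Lemma pdJ_beta_Z2_Q0 x : Jdom x -> pdJ Z2 beta x = 0 /\ pdJ (Q0 0) beta x = 0.
Proof.
  assert (Hid : forall y, Jdom y -> pdJ Z2 beta y + y (Q1 0) * pdJ (Q0 0) beta y = 0).
  { intros y Hy. pose proof (W_beta_expanded y Hy) as I.
    rewrite sum_eq_R0 in I; [lra|]. intros k Hk. rewrite pdJ_beta_Q1 by auto. ring. }
  intros Hx. set (x2 := updJ x (Q1 0) (2 * x (Q1 0))).
  assert (Hx2 : Jdom x2) by (unfold Jdom, x2; rewrite upd_same; unfold Jdom in Hx; lra).
  assert (Hpd : forall c, c <> Q1 0 -> pdJ c beta x2 = pdJ c beta x).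
  { intros c Hc. unfold pdJ, pd, x2. rewrite upd_other by exact Hc. apply Derive_ext. intros t.
    rewrite upd_comm by congruence. apply beta_scale_Q1_0.
    - now apply Jdom_upd_other.
    - rewrite upd_other by congruence. pose proof (Rsqr_pos_lt _ Hx). unfold Rsqr in *. lra. }
  pose proof (Hid x Hx) as B1. pose proof (Hid x2 Hx2) as B2.
  rewrite !Hpd in B2 by discriminate. unfold x2 in B2. rewrite upd_same in B2.
  assert (E : x (Q1 0) * pdJ (Q0 0) beta x = 0) by lra.
  apply Rmult_integral in E as [E|E]; [contradiction | split; lra].
Qed.

Lemma beta_eq_of_agree cs : (forall c, In c cs -> forall z, Jdom z -> pdJ c beta z = 0) ->
  forall X Y, Jdom X -> Jdom Y -> 0 < X (Q1 0) * Y (Q1 0) ->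
  (forall c, (cord c <= N)%nat -> ~ In c cs -> X c = Y c) -> beta X = beta Y.
Proof.
  induction cs as [|c cs IH]; intros Hz X Y HX HY Hs Hagree.
  - apply beta_order_le. intros c Hc. apply Hagree; auto.
  - set (X1 := updJ X c (Y c)).
    assert (HX1 : X1 (Q1 0) = if coord_eq_dec c (Q1 0) then Y (Q1 0) else X (Q1 0)).
    { unfold X1. destruct (coord_eq_dec c (Q1 0)) as [->|Hne]; [apply upd_same | now apply upd_other]. }
    transitivity (beta X1).
    { rewrite <- (upd_id coord_eq_dec X c) at 1. apply beta_line; [|apply Hz; now left].
      intros u Hu. unfold Jdom. destruct (coord_eq_dec c (Q1 0)) as [->|Hne].
      - rewrite upd_same. intros E. pose proof (Rmult_pos_between _ _ _ Hs Hu). rewrite E in *. lra.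
      - now rewrite upd_other. }
    apply IH; [intros c' Hc'; apply Hz; now right | | exact HY | |].
    + unfold Jdom. rewrite HX1. now destruct (coord_eq_dec c (Q1 0)).
    + rewrite HX1. destruct (coord_eq_dec c (Q1 0)); [nra | exact Hs].
    + intros c' Hc' Hnin. unfold X1. destruct (coord_eq_dec c' c) as [->|Hne]; [apply upd_same|].
      rewrite upd_other by exact Hne. apply Hagree; [exact Hc'|]. intros [E|E]; auto.
Qed.

End ForwardDirection.

Definition cont_at (M : nat) (f : jet -> R) (p : jet) : Prop :=
  forall eps, 0 < eps -> exists d, 0 < d /\ forall y, near_ord cord M d p y -> Rabs (f y - f p) < eps.

Lemma near_ord_mono M d d' (p y : jet) : d <= d' -> near_ord cord M d p y -> near_ord cord M d' p y.
Proof. intros Hd H c Hc. specialize (H c Hc). lra. Qed.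

Lemma cont_at_const M a p : cont_at M (fun _ => a) p.
Proof. intros eps He. exists 1. split; [lra|]. intros. now rewrite Rminus_diag, Rabs_R0. Qed.

Lemma cont_at_coord M c p : (cord c <= M)%nat -> cont_at M (fun q => q c) p.
Proof. intros Hc eps He. exists eps. split; [exact He|]. intros y Hy. now apply Hy. Qed.

Lemma cont_at_comp1 M (h : R -> R) f p :
  continuity_pt h (f p) -> cont_at M f p -> cont_at M (fun q => h (f q)) p.
Proof.
  intros Hh Hf eps He. destruct (proj1 (continuity_pt_locally h (f p)) Hh (mkposreal eps He)) as [e1 H1].
  destruct (Hf e1 (cond_pos e1)) as [d [Hd Hfd]]. exists d. split; [exact Hd|].
  intros y Hy. apply H1, Hfd, Hy.
Qed.

Lemma cont_at_comp2 M (h : R -> R -> R) f g p :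
  filterlim (fun z : R * R => h (fst z) (snd z)) (filter_prod (locally (f p)) (locally (g p)))
    (locally (h (f p) (g p))) ->
  cont_at M f p -> cont_at M g p -> cont_at M (fun q => h (f q) (g q)) p.
Proof.
  intros Hh Hf Hg eps He.
  destruct (Hh _ (locally_ball (h (f p) (g p)) (mkposreal eps He))) as [P Q [e1 HP] [e2 HQ] HPQ].
  destruct (Hf e1 (cond_pos e1)) as [d1 [Hd1 H1]]. destruct (Hg e2 (cond_pos e2)) as [d2 [Hd2 H2]].
  exists (Rmin d1 d2). split; [now apply Rmin_pos|]. intros y Hy.
  apply (HPQ (f y) (g y)); [apply HP, H1 | apply HQ, H2]; eapply near_ord_mono; [|exact Hy| |exact Hy].
  - apply Rmin_l.
  - apply Rmin_r.
Qed.

Lemma cont_at_peval M e p : vars_le M e -> Jdom p -> cont_at M (peval e) p.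
Proof.
  intros Hv Hp. induction e as [c|k| |a IHa b IHb|a IHa b IHb]; simpl in Hv |- *.
  - apply cont_at_const.
  - now apply (cont_at_coord M (Q1 k)).
  - apply (cont_at_comp1 M Rinv (fun q => q (Q1 0))); [|apply cont_at_coord; simpl; lia].
    apply (is_derive_continuity_pt _ _ (- / (p (Q1 0)) ^ 2)). auto_derive; [exact Hp|]. field. exact Hp.
  - apply (cont_at_comp2 M Rplus); [exact (filterlim_plus _ _) | apply IHa | apply IHb]; tauto.
  - apply (cont_at_comp2 M Rmult); [exact (@filterlim_mult R_AbsRing _ _) | apply IHa | apply IHb]; tauto.
Qed.

Lemma cont_at_DI N j p : (j <= N)%nat -> Jdom p -> cont_at (S N) (DI j) p.
Proof.
  intros Hj Hp. rewrite DI_eq.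
  apply (cont_at_comp2 (S N) Rplus); [exact (filterlim_plus _ _) | apply cont_at_coord; simpl; lia|].
  apply cont_at_peval; [apply (vars_le_mono j); [lia | apply vars_le_DIpoly] | exact Hp].
Qed.

Lemma args_near N p : Jdom p -> exists d, 0 < d /\
  forall p', near_ord cord (S N) d p p' -> near_ord (fun i : nat => i) (S N) 1 (args p) (args p').
Proof.
  intros Hp. induction N as [|N IH].
  - destruct (cont_at_DI 0 0 p (le_n 0) Hp 1 Rlt_0_1) as [d [Hd H]].
    exists (Rmin d 1). split; [apply Rmin_pos; lra|].
    intros p' Hp' [|[|i]] Hi; simpl; [| |lia].
    + specialize (Hp' Z1 ltac:(simpl; lia)). pose proof (Rmin_r d 1). lra.
    + apply H. eapply near_ord_mono; [apply Rmin_l | exact Hp'].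
  - destruct IH as [d1 [Hd1 H1]].
    destruct (cont_at_DI (S N) (S N) p (le_n _) Hp 1 Rlt_0_1) as [d2 [Hd2 H2]].
    exists (Rmin d1 d2). split; [now apply Rmin_pos|].
    intros p' Hp' i Hi. destruct (Nat.eq_dec i (S (S N))) as [->|Hne].
    + apply H2. eapply near_ord_mono; [apply Rmin_r | exact Hp'].
    + apply H1; [|lia]. intros c Hc. eapply Rlt_le_trans; [apply Hp'; lia | apply Rmin_l].
Qed.

(* A right inverse of [args]: invariants prescribed by [y], other parametric coordinates from [p]. *)
Definition args_section (p : jet) (y : nat -> R) : jet := fun c =>
  match c with
  | Z1 => y O
  | Q0 (S j) => y (S j) - peval (DIpoly j) p
  | _ => p c
  end.

Definition args_section_coord (i : nat) : coord := match i with O => Z1 | S j => Q0 (S j) end.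
Definition args_section_offset (p : jet) (i : nat) : R :=
  match i with O => 0 | S j => peval (DIpoly j) p end.

Lemma Psi_args_section p y j : Psi (args_section p y) (Q0 (S j)) = y (S j).
Proof. simpl. rewrite (peval_ext (DIpoly j) (args_section p y) p) by reflexivity. ring. Qed.

Lemma args_section_upd p y i t :
  args_section p (upd PeanoNat.Nat.eq_dec y i t) =
  updJ (args_section p y) (args_section_coord i) (t - args_section_offset p i).
Proof.
  apply functional_extensionality. intros c. unfold upd, args_section, args_section_coord, args_section_offset.
  destruct c as [| |[|j]|k], i as [|i];
  repeat match goal with
         | |- context [Nat.eq_dec ?a ?b] => destruct (Nat.eq_dec a b)
         | |- context [coord_eq_dec ?a ?b] => destruct (coord_eq_dec a b)
         end;
  try (match goal with H : Q0 _ = Q0 _ |- _ => injection H; intros end);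
  try congruence; try lia; try ring.
Qed.

Lemma args_section_coord_val p y i : args_section p y (args_section_coord i) = y i - args_section_offset p i.
Proof. destruct i; simpl; ring. Qed.

Lemma cont_on_args_section p (D : (nat -> R) -> Prop) f : Jdom p ->
  cont_on cord Jdom f -> cont_on (fun i : nat => i) D (fun y => f (args_section p y)).
Proof.
  intros Hp Hf y _ eps He.
  destruct (Hf (args_section p y) Hp eps He) as [M [d [Hd H1]]].
  exists M, d. split; [exact Hd|]. intros y' _ Hy'. apply H1; [exact Hp|].
  intros [| |[|j]|k] Hc; simpl in Hc |- *; try (rewrite Rminus_diag, Rabs_R0; exact Hd).
  - apply Hy'. lia.
  - replace (y' (S j) - peval (DIpoly j) p - (y (S j) - peval (DIpoly j) p)) with (y' (S j) - y (S j)) by ring.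
    apply Hy'. lia.
Qed.

Lemma is_derive_args_section p f y i : Jdom p -> has_partials_on coord_eq_dec Jdom f ->
  is_derive (fun t => f (args_section p (upd PeanoNat.Nat.eq_dec y i t))) (y i)
    (pd coord_eq_dec (args_section_coord i) f (args_section p y)).
Proof.
  intros Hp Hf.
  apply (is_derive_ext
    (fun t => f (updJ (args_section p y) (args_section_coord i) (t - args_section_offset p i)))).
  { intros t. now rewrite args_section_upd. }
  pose proof (Hf (args_section_coord i) (args_section p y) Hp) as Hex. rewrite args_section_coord_val in Hex.
  pose proof (is_derive_comp (fun u => f (updJ (args_section p y) (args_section_coord i) u))
    (fun t => t - args_section_offset p i) (y i) _ 1 (Derive_correct _ _ Hex)) as Hc.
  unfold pd. rewrite args_section_coord_val. replace (Derive _ _) with (scal 1 (Derive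
    (fun u => f (updJ (args_section p y) (args_section_coord i) u)) (y i - args_section_offset p i)))
    by (unfold scal; simpl; unfold mult; simpl; ring).
  apply Hc. auto_derive; [exact I | ring].
Qed.

Lemma Ck_on_args_section p (D : (nat -> R) -> Prop) k : Jdom p ->
  forall f, Ck_on coord_eq_dec cord Jdom k f ->
  Ck_on PeanoNat.Nat.eq_dec (fun i : nat => i) D k (fun y => f (args_section p y)).
Proof.
  intros Hp. induction k as [|k IH]; intros f Hf; simpl in Hf |- *; [now apply cont_on_args_section|].
  destruct Hf as [Hc Hd]. split; [now apply cont_on_args_section|]. intros i.
  assert (Hpart : has_partials_on coord_eq_dec Jdom f) by (intros c y Hy; now apply Hd).
  split; [intros y _; eexists; now apply is_derive_args_section|].
  replace (pd PeanoNat.Nat.eq_dec i (fun y => f (args_section p y)))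
    with (fun y => pd coord_eq_dec (args_section_coord i) f (args_section p y)).
  - apply IH, Hd.
  - apply functional_extensionality. intros y. symmetry. unfold pd at 1.
    now apply is_derive_unique, is_derive_args_section.
Qed.

Lemma Rmult_pos_near a b : Rabs (a - b) < Rabs b -> 0 < a * b.
Proof. unfold Rabs. destruct (Rcase_abs (a - b)), (Rcase_abs b); intros; nra. Qed.

Lemma alpha_args_section N alpha p p' :
  order_le cord N alpha -> smooth_on coord_eq_dec cord Jdom alpha ->
  (forall p, Jdom p -> Dh2 N alpha p = 0) -> Jdom p -> Jdom p' ->
  Rabs (p' (Q1 0) - p (Q1 0)) < Rabs (p (Q1 0)) -> alpha p' = alpha (args_section p (args p')).
Proof.
  intros Hord Hsm Hdh Hp Hp' Hclose. rewrite !(alpha_beta alpha).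
  apply (beta_eq_of_agree N alpha Hord Hsm (Z2 :: Q0 0 :: map Q1 (seq 0 (S N)))).
  - intros c Hc z Hz. destruct Hc as [<-|[<-|Hc]]; [apply (pdJ_beta_Z2_Q0 N alpha); auto..|].
    apply in_map_iff in Hc as [k [<- Hk]]. apply in_seq in Hk. apply (pdJ_beta_Q1 N alpha); auto. lia.
  - exact Hp'.
  - exact Hp.
  - now apply Rmult_pos_near.
  - intros c Hc Hnin. destruct c as [| |[|j]|k].
    + reflexivity.
    + exfalso. apply Hnin. now left.
    + exfalso. apply Hnin. right. now left.
    + now rewrite Psi_args_section, Psi_Q0.
    + exfalso. apply Hnin. right. right. apply in_map, in_seq. simpl in Hc. lia.
Qed.

Lemma local_rep_of_Dh2_zero N alpha p :
  order_le cord N alpha -> smooth_on coord_eq_dec cord Jdom alpha ->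
  (forall p, Jdom p -> Dh2 N alpha p = 0) -> Jdom p ->
  exists (r M : nat) (d e : R) (F : (nat -> R) -> R),
    0 < d /\ 0 < e /\
    order_le (fun i : nat => i) (S r) F /\
    smooth_on PeanoNat.Nat.eq_dec (fun i : nat => i)
      (fun x => near_ord (fun i : nat => i) (S r) e (args p) x) F /\
    (forall p', Jdom p' -> near_ord cord M d p p' ->
       near_ord (fun i : nat => i) (S r) e (args p) (args p') /\ alpha p' = F (args p')).
Proof.
  intros Hord Hsm Hdh Hp.
  destruct (args_near N p Hp) as [d0 [Hd0 Hnear]].
  set (d := Rmin d0 (Rabs (p (Q1 0)))).
  assert (Hd : 0 < d) by (apply Rmin_pos; [exact Hd0 | now apply Jdom_abs_pos]).
  exists N, (S N), d, 1, (fun y => alpha (args_section p y)).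
  split; [exact Hd|]. split; [lra|]. split; [|split].
  - intros y y' Hyy. apply Hord. intros [| |[|j]|k] Hc; simpl; try reflexivity.
    + apply Hyy. lia.
    + rewrite Hyy; [reflexivity | simpl in Hc; lia].
  - intros k. now apply Ck_on_args_section.
  - intros p' Hp' Hpp'. split; [apply Hnear; eapply near_ord_mono; [apply Rmin_l | exact Hpp']|].
    apply (alpha_args_section N); auto.
    eapply Rlt_le_trans; [apply Hpp'; simpl; lia | apply Rmin_r].
Qed.

Theorem theorem30 :
  forall (N : nat) (alpha : jet -> R),
    order_le cord N alpha ->
    smooth_on coord_eq_dec cord Jdom alpha ->
    ((forall p, Jdom p -> Dh2 N alpha p = 0) <->
     (forall p, Jdom p ->
        exists (r M : nat) (d e : R) (F : (nat -> R) -> R),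
          0 < d /\ 0 < e /\
          order_le (fun i : nat => i) (S r) F /\
          smooth_on PeanoNat.Nat.eq_dec (fun i : nat => i)
            (fun x => near_ord (fun i : nat => i) (S r) e (args p) x) F /\
          (forall p', Jdom p' -> near_ord cord M d p p' ->
             near_ord (fun i : nat => i) (S r) e (args p) (args p') /\
             alpha p' = F (args p')))).
Proof.
  intros N alpha Hord Hsm. split.
  - intros Hdh p Hp. now apply (local_rep_of_Dh2_zero N).
  - intros Hrep p Hp. destruct (Hrep p Hp) as (r & M & d & e & F & Hd & He & HF & HFsm & Hloc).
    exact (Dh2_zero_of_local_rep N r M d e alpha F p Hd He Hp HF HFsm Hloc Hord).
Qed.
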